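(* Let $M$ be a complete pointed metric space and let $V=\{m_{xy}: x,y\in M,\ x\neq y\}\subset\mathcal F(M)$ be the set of molecules. Then the weak closure of $V$ in $\mathcal F(M)$ is contained in $V\cup\{0\}$.
   Context: A pointed metric space $M$ has a distinguished origin $0$. $\mathrm{Lip}_0(M)$ is the Banach space of real Lipschitz functions on $M$ vanishing at $0$ with the best Lipschitz constant as norm; $\delta(x)\in\mathrm{Lip}_0(M)^*$ is evaluation at $x$, and the Lipschitz free space $\mathcal F(M)$ is the closed linear span of $\delta(M)$ in $\mathrm{Lip}_0(M)^*$, with $\mathcal F(M)^*=\mathrm{Lip}_0(M)$. The molecule is $m_{xy}=(\delta(x)-\delta(y))/d(x,y)$ for $x\neq y$. *)

From Stdlib Require Import Reals Lra List.
Open Scope R_scope.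

Definition is_metric {T : Type} (d : T -> T -> R) : Prop :=
  (forall x y, 0 <= d x y) /\
  (forall x y, d x y = 0 <-> x = y) /\
  (forall x y, d x y = d y x) /\
  (forall x y z, d x z <= d x y + d y z).

Definition complete_metric {T : Type} (d : T -> T -> R) : Prop :=
  forall u : nat -> T,
    (forall eps, 0 < eps -> exists N, forall m n, (N <= m)%nat -> (N <= n)%nat ->
        d (u m) (u n) < eps) ->
    exists l, forall eps, 0 < eps -> exists N, forall n, (N <= n)%nat -> d (u n) l < eps.

Definition lipschitz_with {T : Type} (d : T -> T -> R) (f : T -> R) (L : R) : Prop :=
  forall x y, Rabs (f x - f y) <= L * d x y.

Definition Lip0 {T : Type} (d : T -> T -> R) (o : T) (f : T -> R) : Prop :=
  f o = 0 /\ exists L, lipschitz_with d f L.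

Definition Lip0_ball {T : Type} (d : T -> T -> R) (o : T) (f : T -> R) : Prop :=
  f o = 0 /\ lipschitz_with d f 1.

(* An element of Lip_0(M)^* is represented by a functional Phi on functions
   T -> R; only its values on Lip_0(M) matter.  It must be linear on Lip_0(M)
   (boundedness follows from membership in F(M) below). *)
Definition linear_on_Lip0 {T : Type} (d : T -> T -> R) (o : T)
  (Phi : (T -> R) -> R) : Prop :=
  forall (a b : R) (f g : T -> R), Lip0 d o f -> Lip0 d o g ->
    Phi (fun t => a * f t + b * g t) = a * Phi f + b * Phi g.

(* Finite linear combination sum_i a_i delta(x_i), evaluated at f. *)
Definition eval_comb {T : Type} (c : list (R * T)) (f : T -> R) : R :=
  fold_right (fun p acc => fst p * f (snd p) + acc) 0 c.

(* Lipschitz free space F(M): the dual-norm closure of span delta(M) in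
   Lip_0(M)^*. *)
Definition in_free_space {T : Type} (d : T -> T -> R) (o : T)
  (Phi : (T -> R) -> R) : Prop :=
  linear_on_Lip0 d o Phi /\
  forall eps, 0 < eps -> exists c : list (R * T),
    forall f, Lip0_ball d o f -> Rabs (Phi f - eval_comb c f) <= eps.

Definition molecule {T : Type} (d : T -> T -> R) (x y : T) : (T -> R) -> R :=
  fun f => (f x - f y) / d x y.

(* Phi lies in the weak closure (sigma(F(M), Lip_0(M))) of the set of
   molecules: every basic weak neighbourhood
   {nu : |<f_i, nu - Phi>| < eps, i = 1..n}, f_i in Lip_0(M), contains a
   molecule. *)
Definition in_weak_closure_of_molecules {T : Type} (d : T -> T -> R) (o : T)
  (Phi : (T -> R) -> R) : Prop :=
  forall (fs : list (T -> R)) (eps : R),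
    Forall (Lip0 d o) fs -> 0 < eps ->
    exists x y, x <> y /\
      Forall (fun f => Rabs (molecule d x y f - Phi f) < eps) fs.

Definition same_functional {T : Type} (d : T -> T -> R) (o : T)
  (Phi Psi : (T -> R) -> R) : Prop :=
  forall f, Lip0 d o f -> Phi f = Psi f.

From Stdlib Require Import Reals Lra Lia Psatz List.
From Stdlib Require Import Classical ClassicalEpsilon FunctionalExtensionality.
Open Scope R_scope.

(* Say that Phi charges U when Phi does not annihilate every f in Lip_0(M) vanishing
   outside U.  Approximating Phi in norm by finite combinations of point evaluations shows
   that if Phi charges U, then for every rho > 0 it charges the part of U in some B(s, rho);
   nesting such balls and using completeness yields a point p such that Phi charges every
   ball around p.  Either Phi also charges a set at positive distance from p and from the
   base point o, which produces a second such point q <> p, or Phi annihilates every f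
   with f(p) = 0, and then o plays the role of q.  A molecule m_xy weakly close to Phi,
   tested against f and against functions localized near p and near q, must have one of
   x, y close to p and the other close to q, so m_xy f is close to +- m_pq f.  Hence
   |Phi f| = |m_pq f| for every f, and additivity fixes the sign. *)

Definition nonexpansive (h : R -> R) : Prop := forall a b, Rabs (h a - h b) <= Rabs (a - b).

Definition clamp (lo hi z : R) : R := Rmax lo (Rmin hi z).

Ltac clamp_cases :=
  unfold clamp, Rmax, Rmin; repeat destruct Rle_dec; unfold Rabs; repeat destruct Rcase_abs; lra.

Lemma clamp_nonexpansive lo hi : lo <= hi -> nonexpansive (clamp lo hi).
Proof. intros H a b. clamp_cases. Qed.

Lemma clamp_range lo hi z : lo <= hi -> lo <= clamp lo hi z <= hi.
Proof. intros H. clamp_cases. Qed.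

Lemma clamp_id lo hi z : lo <= z <= hi -> clamp lo hi z = z.
Proof. intros H. clamp_cases. Qed.

Lemma clamp_hi lo hi z : lo <= hi -> hi <= z -> clamp lo hi z = hi.
Proof. intros H1 H2. clamp_cases. Qed.

Lemma clamp_lt_hi lo hi z : lo <= hi -> clamp lo hi z < hi -> z < hi.
Proof. intros H1 H2. revert H2. clamp_cases. Qed.

Lemma clamp_gt_lo lo hi z : lo <= hi -> lo < clamp lo hi z -> lo < z.
Proof. intros H1 H2. revert H2. clamp_cases. Qed.

Lemma Rabs_eq_cases a b : Rabs a = Rabs b -> a = b \/ a = - b.
Proof. unfold Rabs; repeat destruct Rcase_abs; intros; lra. Qed.

Lemma Rabs_sub_le a b : Rabs (a - b) <= Rabs a + Rabs b.
Proof. rewrite <- (Rabs_Ropp b). apply Rabs_triang. Qed.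

Lemma Rabs_mul_unit a p : 0 <= p <= 1 -> Rabs (a * p) <= Rabs a.
Proof. intros Hp. rewrite Rabs_mult, (Rabs_right p) by lra. pose proof (Rabs_pos a). nra. Qed.

Lemma Rabs_mul_sub_le a b p q : 0 <= q <= 1 ->
  Rabs (a * p - b * q) <= Rabs a * Rabs (p - q) + Rabs (a - b).
Proof.
  intros Hq. replace (a * p - b * q) with (a * (p - q) + q * (a - b)) by ring.
  eapply Rle_trans; [apply Rabs_triang |]. rewrite !Rabs_mult, (Rabs_right q) by lra.
  pose proof (Rabs_pos (a - b)). nra.
Qed.

Lemma half_pow_small eps : 0 < eps -> exists N, forall n, (N <= n)%nat -> (/ 2) ^ n < eps.
Proof.
  intros Heps. destruct (pow_lt_1_zero (/ 2)) with (y := eps) as [N HN]; auto.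
  - rewrite Rabs_right; lra.
  - exists N. intros n Hn. specialize (HN n Hn).
    rewrite Rabs_right in HN; auto. apply Rle_ge, pow_le. lra.
Qed.

Section FiniteCombinations.
Context {T : Type}.
Implicit Types (c : list (R * T)) (F G : T -> R).

Definition comb_mass c : R := fold_right (fun p acc => Rabs (fst p) + acc) 0 c.

Lemma comb_mass_nonneg c : 0 <= comb_mass c.
Proof. induction c; simpl; [lra |]. pose proof (Rabs_pos (fst a)). lra. Qed.

Lemma eval_comb_scale c F k : eval_comb c (fun t => k * F t) = k * eval_comb c F.
Proof. induction c; simpl; [ring |]. rewrite IHc. ring. Qed.

Lemma eval_comb_ext c F G : (forall s, In s (map snd c) -> F s = G s) ->
  eval_comb c F = eval_comb c G.
Proof.
  induction c as [| a c IH]; simpl; intros H; auto.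
  rewrite H, IH by auto. reflexivity.
Qed.

Lemma eval_comb_bound c F B : 0 <= B -> (forall t, Rabs (F t) <= B) ->
  Rabs (eval_comb c F) <= comb_mass c * B.
Proof.
  intros HB HF. induction c; simpl.
  - rewrite Rabs_R0. lra.
  - eapply Rle_trans; [apply Rabs_triang |]. rewrite Rabs_mult.
    pose proof (Rabs_pos (fst a)). pose proof (HF (snd a)). nra.
Qed.

Lemma list_bound (S : list T) F : exists B, 0 < B /\ forall s, In s S -> Rabs (F s) <= B.
Proof.
  induction S as [| a S [B [HB IH]]]; simpl.
  - exists 1. split; [lra | tauto].
  - exists (Rabs (F a) + B). pose proof (Rabs_pos (F a)). split; [lra |].
    intros s [<- | Hs]; [lra |]. specialize (IH s Hs). lra.
Qed.

End FiniteCombinations.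

Section FreeSpace.
Context {T : Type} {d : T -> T -> R} (Hm : is_metric d).

Lemma dist_nonneg x y : 0 <= d x y.
Proof. apply (proj1 Hm). Qed.

Lemma dist_eq0 x y : d x y = 0 <-> x = y.
Proof. apply (proj1 (proj2 Hm)). Qed.

Lemma dist_self x : d x x = 0.
Proof. now apply dist_eq0. Qed.

Lemma dist_sym x y : d x y = d y x.
Proof. apply (proj1 (proj2 (proj2 Hm))). Qed.

Lemma dist_triangle x y z : d x z <= d x y + d y z.
Proof. apply (proj2 (proj2 (proj2 Hm))). Qed.

Lemma dist_pos x y : x <> y -> 0 < d x y.
Proof.
  intros Hxy. destruct (Rle_lt_or_eq_dec _ _ (dist_nonneg x y)) as [H | H]; auto.
  exfalso. apply Hxy, dist_eq0. auto.
Qed.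

Lemma lipschitz_le f L L' : L <= L' -> lipschitz_with d f L -> lipschitz_with d f L'.
Proof. intros HL Hf x y. specialize (Hf x y). pose proof (dist_nonneg x y). nra. Qed.

Lemma lipschitz_const k : lipschitz_with d (fun _ => k) 0.
Proof. intros x y. rewrite Rminus_diag, Rabs_R0. lra. Qed.

Lemma lipschitz_dist p : lipschitz_with d (fun t => d t p) 1.
Proof.
  intros x y. rewrite Rmult_1_l. apply Rabs_le.
  pose proof (dist_triangle x y p). pose proof (dist_triangle y x p).
  rewrite (dist_sym y x) in *. lra.
Qed.

Lemma lipschitz_div h r : 0 < r -> lipschitz_with d h 1 ->
  lipschitz_with d (fun t => h t / r) (/ r).
Proof.
  intros Hr Hh x y. replace (h x / r - h y / r) with ((h x - h y) * / r) by (field; lra).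
  pose proof (Rinv_0_lt_compat r Hr). rewrite Rabs_mult, (Rabs_right (/ r)) by lra.
  specialize (Hh x y). nra.
Qed.

Lemma lipschitz_comp h f L : nonexpansive h -> lipschitz_with d f L ->
  lipschitz_with d (fun t => h (f t)) L.
Proof. intros Hh Hf x y. eapply Rle_trans; [apply Hh | apply Hf]. Qed.

Lemma lipschitz_min f g L : lipschitz_with d f L -> lipschitz_with d g L ->
  lipschitz_with d (fun t => Rmin (f t) (g t)) L.
Proof.
  intros Hf Hg x y. specialize (Hf x y). specialize (Hg x y). revert Hf Hg.
  unfold Rmin. destruct (Rle_dec (f x) (g x)), (Rle_dec (f y) (g y));
    unfold Rabs; repeat destruct Rcase_abs; intros; lra.
Qed.

Lemma lipschitz_mul_cutoff g psi L K B : 0 <= L -> 0 <= K -> 0 <= B ->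
  lipschitz_with d g L -> lipschitz_with d psi K -> (forall t, 0 <= psi t <= 1) ->
  (forall t, psi t <> 0 -> Rabs (g t) <= B) ->
  lipschitz_with d (fun t => g t * psi t) (L + B * K).
Proof.
  intros HL HK HB Hg Hpsi Hrange Hbound.
  assert (Hside : forall x y, psi x <> 0 ->
            Rabs (g x * psi x - g y * psi y) <= (L + B * K) * d x y).
  { intros x y Hx. eapply Rle_trans; [apply Rabs_mul_sub_le, Hrange |].
    specialize (Hbound x Hx). specialize (Hg x y). specialize (Hpsi x y).
    pose proof (Rabs_pos (g x)). pose proof (Rabs_pos (psi x - psi y)). nra. }
  intros x y.
  destruct (Req_dec (psi x) 0) as [Hx | Hx]; [destruct (Req_dec (psi y) 0) as [Hy | Hy] |].
  - rewrite Hx, Hy, !Rmult_0_r, Rminus_diag, Rabs_R0.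
    apply Rmult_le_pos; [pose proof (Rmult_le_pos B K HB HK); lra | apply dist_nonneg].
  - rewrite Rabs_minus_sym, dist_sym. auto.
  - auto.
Qed.

Definition bump (h : T -> R) (r : R) (t : T) : R := clamp 0 1 (2 - h t / r).

Lemma bump_range h r t : 0 <= bump h r t <= 1.
Proof. apply clamp_range. lra. Qed.

Lemma bump_one h r t : 0 < r -> h t <= r -> bump h r t = 1.
Proof.
  intros Hr Ht. apply clamp_hi; [lra |].
  assert (h t / r <= 1).
  { apply (Rmult_le_reg_r r); auto. unfold Rdiv. rewrite Rmult_assoc, Rinv_l by lra. lra. }
  lra.
Qed.

Lemma bump_support h r t : 0 < r -> bump h r t <> 0 -> h t < 2 * r.
Proof.
  intros Hr Ht. assert (Hpos : 0 < 2 - h t / r).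
  { apply (clamp_gt_lo 0 1); [lra |]. pose proof (bump_range h r t). unfold bump in *. lra. }
  apply (Rmult_lt_reg_r (/ r)); [apply Rinv_0_lt_compat; lra |].
  replace (2 * r * / r) with 2 by (field; lra). unfold Rdiv in Hpos. lra.
Qed.

Lemma bump_lipschitz h r : 0 < r -> lipschitz_with d h 1 -> lipschitz_with d (bump h r) (/ r).
Proof.
  intros Hr Hh x y. unfold bump. eapply Rle_trans; [apply clamp_nonexpansive; lra |].
  replace (2 - h x / r - (2 - h y / r)) with (h y / r - h x / r) by ring.
  rewrite Rabs_minus_sym. apply lipschitz_div; auto.
Qed.

Definition avoid (r : R) (S : list T) (t : T) : R :=
  fold_right (fun s acc => Rmin (clamp 0 1 (d t s / r)) acc) 1 S.

Lemma avoid_range r S t : 0 <= avoid r S t <= 1.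
Proof.
  induction S as [| s S IH]; simpl; [lra |].
  pose proof (clamp_range 0 1 (d t s / r)). unfold Rmin. destruct Rle_dec; lra.
Qed.

Lemma avoid_lipschitz r S : 0 < r -> lipschitz_with d (avoid r S) (/ r).
Proof.
  intros Hr. pose proof (Rinv_0_lt_compat r Hr). induction S as [| s S IH]; simpl.
  - apply (lipschitz_le _ 0); [lra | apply lipschitz_const].
  - apply lipschitz_min; auto. apply lipschitz_comp; [apply clamp_nonexpansive; lra |].
    apply lipschitz_div, lipschitz_dist; auto.
Qed.

Lemma avoid_zero r S s : In s S -> avoid r S s = 0.
Proof.
  induction S as [| s' S IH]; simpl; [tauto |]. intros Hs.
  pose proof (clamp_range 0 1 (d s s' / r)). pose proof (avoid_range r S s).
  destruct Hs as [<- | Hs].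
  - rewrite dist_self, Rdiv_0_l, clamp_id by lra. unfold Rmin. destruct Rle_dec; lra.
  - rewrite IH by auto. unfold Rmin. destruct Rle_dec; lra.
Qed.

Lemma avoid_near r S t : 0 < r -> avoid r S t < 1 -> exists s, In s S /\ d t s < r.
Proof.
  intros Hr. induction S as [| s S IH]; simpl; [lra |]. intros Ht.
  destruct (Rle_dec (clamp 0 1 (d t s / r)) (avoid r S t)) as [Hle | Hle].
  - exists s. split; auto. rewrite Rmin_left in Ht by auto.
    apply clamp_lt_hi in Ht; [| lra].
    apply (Rmult_lt_compat_r r) in Ht; auto. unfold Rdiv in Ht.
    rewrite Rmult_assoc, Rinv_l in Ht by lra. lra.
  - rewrite Rmin_right in Ht by lra. destruct (IH Ht) as [s' [Hs' Hd]]. eauto.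
Qed.

Lemma molecule_swap x y f : molecule d y x f = - molecule d x y f.
Proof. unfold molecule. rewrite dist_sym. unfold Rdiv. ring. Qed.

Lemma molecule_separates x y g a : Rabs (molecule d x y g - a) < Rabs a -> g x <> g y.
Proof.
  intros H E. unfold molecule in H.
  rewrite E, Rminus_diag, Rdiv_0_l, Rminus_0_l, Rabs_Ropp in H. lra.
Qed.

Lemma molecule_sub_bound u1 u2 x y f K rho : u1 <> u2 -> 0 <= K -> lipschitz_with d f K ->
  rho <= d u1 u2 / 4 -> d x u1 < rho -> d y u2 < rho ->
  Rabs (molecule d x y f - molecule d u1 u2 f) <=
  4 * rho * (K * d u1 u2 + Rabs (f u1 - f u2)) / (d u1 u2 * d u1 u2).
Proof.
  intros Hne HK Hf Hr4 Hx Hy. pose proof (dist_pos u1 u2 Hne) as Hd0.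
  set (d0 := d u1 u2) in *. set (D := d x y).
  assert (HD : - (2 * rho) <= d0 - D <= 2 * rho).
  { pose proof (dist_triangle u1 x u2). pose proof (dist_triangle x y u2).
    pose proof (dist_triangle x u1 y). pose proof (dist_triangle u1 u2 y).
    rewrite (dist_sym u1 x), (dist_sym u2 y) in *. unfold d0, D. lra. }
  assert (HDpos : d0 / 2 <= D) by lra.
  set (N := f x - f y). set (N0 := f u1 - f u2).
  assert (HN : Rabs (N - N0) <= 2 * K * rho).
  { unfold N, N0. replace (f x - f y - (f u1 - f u2)) with ((f x - f u1) - (f y - f u2)) by ring.
    eapply Rle_trans; [apply Rabs_sub_le |].
    pose proof (Hf x u1). pose proof (Hf y u2). nra. }
  assert (Hnum : Rabs (N * d0 - N0 * D) <= 2 * rho * (K * d0 + Rabs N0)).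
  { replace (N * d0 - N0 * D) with ((N - N0) * d0 + N0 * (d0 - D)) by ring.
    eapply Rle_trans; [apply Rabs_triang |]. rewrite !Rabs_mult, (Rabs_right d0) by lra.
    pose proof (Rabs_pos N0). pose proof (Rabs_le _ _ HD). nra. }
  unfold molecule. fold D d0 N N0.
  replace (N / D - N0 / d0) with ((N * d0 - N0 * D) * / (D * d0)) by (field; lra).
  assert (HI : / (D * d0) <= 2 / (d0 * d0)).
  { replace (2 / (d0 * d0)) with (/ (d0 * d0 / 2)) by (field; lra).
    apply Rinv_le_contravar; nra. }
  rewrite Rabs_mult, (Rabs_right (/ (D * d0))) by (apply Rle_ge, Rlt_le, Rinv_0_lt_compat; nra).
  eapply Rle_trans.
  - apply Rmult_le_compat; [apply Rabs_pos | | exact Hnum | exact HI].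
    apply Rlt_le, Rinv_0_lt_compat. nra.
  - right. field. lra.
Qed.

Lemma abs_molecule_near u1 u2 f K gam : u1 <> u2 -> 0 <= K -> lipschitz_with d f K -> 0 < gam ->
  exists rho, 0 < rho /\ forall x y,
    (d x u1 < rho \/ d y u1 < rho) -> (d x u2 < rho \/ d y u2 < rho) ->
    Rabs (Rabs (molecule d x y f) - Rabs (molecule d u1 u2 f)) < gam.
Proof.
  intros Hne HK Hf Hgam. pose proof (dist_pos u1 u2 Hne) as Hd0.
  set (d0 := d u1 u2) in *. set (Q := K * d0 + Rabs (f u1 - f u2)).
  assert (HQ : 0 <= Q) by (unfold Q; pose proof (Rabs_pos (f u1 - f u2)); nra).
  set (rho := Rmin (d0 / 4) (gam * (d0 * d0) / (4 * (Q + 1)))).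
  assert (Hrho : 0 < rho).
  { apply Rmin_pos; [lra | apply Rdiv_lt_0_compat; [| lra]].
    apply Rmult_lt_0_compat; [lra | apply Rmult_lt_0_compat; lra]. }
  assert (Hr4 : rho <= d0 / 4) by apply Rmin_l.
  assert (Hsmall : 4 * rho * Q / (d0 * d0) < gam).
  { assert (Hr : rho * (4 * (Q + 1)) <= gam * (d0 * d0)).
    { apply (Rmult_le_reg_r (/ (4 * (Q + 1)))); [apply Rinv_0_lt_compat; lra |].
      rewrite Rmult_assoc, Rinv_r, Rmult_1_r by lra. apply Rmin_r. }
    apply (Rmult_lt_reg_r (d0 * d0)); [nra |].
    unfold Rdiv. rewrite Rmult_assoc, Rinv_l, Rmult_1_r by nra. nra. }
  exists rho. split; auto.
  assert (Hfar : forall z, d z u1 < rho -> d z u2 < rho -> False).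
  { intros z H1 H2. pose proof (dist_triangle u1 z u2) as H.
    rewrite (dist_sym u1 z) in H. fold d0 in H. lra. }
  intros x y [H1 | H1] [H2 | H2]; try solve [exfalso; eauto].
  - eapply Rle_lt_trans; [apply Rabs_triang_inv2 |].
    eapply Rle_lt_trans; [| exact Hsmall].
    exact (molecule_sub_bound u1 u2 x y f K rho Hne HK Hf Hr4 H1 H2).
  - rewrite <- (Ropp_involutive (molecule d x y f)), <- molecule_swap, Rabs_Ropp.
    eapply Rle_lt_trans; [apply Rabs_triang_inv2 |].
    eapply Rle_lt_trans; [| exact Hsmall].
    exact (molecule_sub_bound u1 u2 y x f K rho Hne HK Hf Hr4 H1 H2).
Qed.

Context {o : T}.

Lemma Lip0_lipschitz f : Lip0 d o f -> exists K, 0 < K /\ lipschitz_with d f K.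
Proof.
  intros [_ [L HL]]. exists (Rabs L + 1). pose proof (Rle_abs L). pose proof (Rabs_pos L).
  split; [lra |]. apply (lipschitz_le _ L); auto. lra.
Qed.

Lemma Lip0_zero : Lip0 d o (fun _ => 0).
Proof. split; auto. exists 0. apply lipschitz_const. Qed.

Lemma Lip0_comb a b f g h : Lip0 d o f -> Lip0 d o g -> (forall t, h t = a * f t + b * g t) ->
  Lip0 d o h.
Proof.
  intros [Hf0 [L1 H1]] [Hg0 [L2 H2]] Hh. split; [rewrite Hh, Hf0, Hg0; ring |].
  exists (Rabs a * L1 + Rabs b * L2). intros x y. rewrite !Hh.
  replace (a * f x + b * g x - (a * f y + b * g y))
    with (a * (f x - f y) + b * (g x - g y)) by ring.
  eapply Rle_trans; [apply Rabs_triang |]. rewrite !Rabs_mult.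
  specialize (H1 x y). specialize (H2 x y). pose proof (Rabs_pos a). pose proof (Rabs_pos b). nra.
Qed.

Lemma Lip0_add f g : Lip0 d o f -> Lip0 d o g -> Lip0 d o (fun t => f t + g t).
Proof. intros Hf Hg. apply (Lip0_comb 1 1 f g); auto. intros. ring. Qed.

Lemma Lip0_sub f g : Lip0 d o f -> Lip0 d o g -> Lip0 d o (fun t => f t - g t).
Proof. intros Hf Hg. apply (Lip0_comb 1 (-1) f g); auto. intros. ring. Qed.

Context {Phi : (T -> R) -> R} (HF : in_free_space d o Phi).

Lemma Phi_comb a b f g h : Lip0 d o f -> Lip0 d o g -> (forall t, h t = a * f t + b * g t) ->
  Phi h = a * Phi f + b * Phi g.
Proof.
  intros Hf Hg Hh. rewrite <- (proj1 HF a b f g Hf Hg). f_equal.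
  apply functional_extensionality. auto.
Qed.

Lemma Phi_add f g : Lip0 d o f -> Lip0 d o g -> Phi (fun t => f t + g t) = Phi f + Phi g.
Proof. intros Hf Hg. rewrite (Phi_comb 1 1 f g); auto. ring. intros. ring. Qed.

Lemma Phi_sub f g : Lip0 d o f -> Lip0 d o g -> Phi (fun t => f t - g t) = Phi f - Phi g.
Proof. intros Hf Hg. rewrite (Phi_comb 1 (-1) f g); auto. ring. intros. ring. Qed.

Lemma Phi_scale k f : Lip0 d o f -> Phi (fun t => k * f t) = k * Phi f.
Proof. intros Hf. rewrite (Phi_comb k 0 f f); auto. ring. intros. ring. Qed.

Lemma Phi_vanishing g : (forall t, g t = 0) -> Phi g = 0.
Proof.
  intros Hg. rewrite (Phi_comb 0 0 (fun _ => 0) (fun _ => 0)); try apply Lip0_zero.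
  ring. intros. rewrite Hg. ring.
Qed.

Lemma Phi_approx delta : 0 < delta -> exists c, forall F K, 0 < K -> F o = 0 ->
  lipschitz_with d F K -> Rabs (Phi F - eval_comb c F) <= delta * K.
Proof.
  intros Hdelta. destruct (proj2 HF delta Hdelta) as [c Hc]. exists c. intros F K HK HF0 HFK.
  pose proof (Rinv_0_lt_compat K HK) as HK'.
  assert (Hball : Lip0_ball d o (fun t => / K * F t)).
  { split; [rewrite HF0; ring |]. intros x y.
    replace (/ K * F x - / K * F y) with (/ K * (F x - F y)) by ring.
    rewrite Rabs_mult, (Rabs_right (/ K)) by lra. specialize (HFK x y).
    replace (1 * d x y) with (/ K * (K * d x y)) by (field; lra).
    apply Rmult_le_compat_l; lra. }
  specialize (Hc _ Hball). rewrite Phi_scale, eval_comb_scale in Hc by (split; eauto).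
  replace (/ K * Phi F - / K * eval_comb c F) with (/ K * (Phi F - eval_comb c F)) in Hc by ring.
  rewrite Rabs_mult, (Rabs_right (/ K)) in Hc by lra.
  apply (Rmult_le_compat_l K) in Hc; [| lra].
  rewrite <- Rmult_assoc, Rinv_r, Rmult_1_l in Hc by lra. lra.
Qed.

Lemma Phi_approx_points delta : 0 < delta -> exists S : list T, forall F G K, 0 < K ->
  F o = 0 -> G o = 0 -> lipschitz_with d F K -> lipschitz_with d G K ->
  (forall s, In s S -> F s = G s) -> Rabs (Phi F - Phi G) <= delta * K.
Proof.
  intros Hdelta. destruct (Phi_approx (delta / 2)) as [c Hc]; [lra |].
  exists (map snd c). intros F G K HK HF0 HG0 HFK HGK HFG.
  pose proof (Hc F K HK HF0 HFK) as HF'. pose proof (Hc G K HK HG0 HGK) as HG'.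
  rewrite (eval_comb_ext c F G HFG) in HF'.
  replace (Phi F - Phi G) with ((Phi F - eval_comb c G) - (Phi G - eval_comb c G)) by ring.
  eapply Rle_trans; [apply Rabs_sub_le |]. lra.
Qed.

Lemma Phi_small a K : 0 < a -> 0 < K -> exists eta, 0 < eta /\ forall F, F o = 0 ->
  lipschitz_with d F K -> (forall t, Rabs (F t) <= eta) -> Rabs (Phi F) <= a.
Proof.
  intros Ha HK. destruct (Phi_approx (a / (2 * K))) as [c Hc]; [apply Rdiv_lt_0_compat; lra |].
  pose proof (comb_mass_nonneg c) as HA.
  set (eta := a / (2 * (comb_mass c + 1))).
  assert (Heta : 0 < eta) by (apply Rdiv_lt_0_compat; lra).
  assert (Hmass : comb_mass c * eta <= a / 2).
  { assert (eta * (2 * (comb_mass c + 1)) = a) by (unfold eta; field; lra). nra. }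
  exists eta. split; auto. intros F HF0 HFK HFeta.
  pose proof (Hc F K HK HF0 HFK) as Happ.
  replace (a / (2 * K) * K) with (a / 2) in Happ by (field; lra).
  pose proof (eval_comb_bound c F eta (Rlt_le _ _ Heta) HFeta).
  replace (Phi F) with ((Phi F - eval_comb c F) + eval_comb c F) by ring.
  eapply Rle_trans; [apply Rabs_triang |]. lra.
Qed.

Definition charges (U : T -> Prop) : Prop :=
  exists g, Lip0 d o g /\ (forall t, g t <> 0 -> U t) /\ Phi g <> 0.

Lemma charges_mono (U V : T -> Prop) : (forall t, U t -> V t) -> charges U -> charges V.
Proof. intros HUV [g [Hg [HgU Hpg]]]. exists g. auto. Qed.

Lemma charges_inhabited U : charges U -> exists t, U t.
Proof.
  intros [g [_ [HgU Hpg]]]. apply NNPP. intros Hempty. apply Hpg, Phi_vanishing.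
  intros t. apply NNPP. intros Ht. apply Hempty. eauto.
Qed.

Lemma charges_bounded U : charges U -> exists g B, 0 < B /\ Lip0 d o g /\
  (forall t, Rabs (g t) <= B) /\ (forall t, g t <> 0 -> U t) /\ Phi g <> 0.
Proof.
  intros [g [Hg [HgU Hpg]]]. destruct (Lip0_lipschitz g Hg) as [K [HK HgK]].
  pose proof (Rabs_pos_lt _ Hpg) as Ha.
  destruct (Phi_approx_points (Rabs (Phi g) / (2 * K))) as [S HS]; [apply Rdiv_lt_0_compat; lra |].
  destruct (list_bound S g) as [B [HB HgB]].
  set (h := fun t => clamp (- B) B (g t)).
  assert (Hh0 : forall t, g t = 0 -> h t = 0).
  { intros t Ht. unfold h. rewrite Ht. apply clamp_id. lra. }
  assert (HhK : lipschitz_with d h K).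
  { apply lipschitz_comp; [apply clamp_nonexpansive; lra | auto]. }
  exists h, B. split; [auto | split; [| split; [| split]]].
  - split; [apply Hh0, (proj1 Hg) | eauto].
  - intros t. apply Rabs_le, clamp_range. lra.
  - intros t Ht. apply HgU. intros Hgt. apply Ht, Hh0, Hgt.
  - intros Hph.
    assert (Hclose : Rabs (Phi g - Phi h) <= Rabs (Phi g) / (2 * K) * K).
    { apply HS; auto; [apply (proj1 Hg) | apply Hh0, (proj1 Hg) |].
      intros s Hs. unfold h. rewrite clamp_id; auto.
      specialize (HgB s Hs). revert HgB. unfold Rabs. destruct Rcase_abs; lra. }
    rewrite Hph, Rminus_0_r in Hclose.
    replace (Rabs (Phi g) / (2 * K) * K) with (Rabs (Phi g) / 2) in Hclose by (field; lra).
    lra.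
Qed.

Lemma charges_cover U r B : 0 < r -> forall S G, Lip0 d o G -> (forall t, Rabs (G t) <= B) ->
  Phi G <> 0 -> (forall t, G t <> 0 -> U t /\ exists s, In s S /\ d t s < r) ->
  exists s, charges (fun t => U t /\ d t s < 2 * r).
Proof.
  intros Hr S. induction S as [| s S IH]; intros G HG HGB HPG HGS.
  - exfalso. apply HPG, Phi_vanishing. intros t. apply NNPP. intros Ht.
    destruct (HGS t Ht) as [_ [s [[] _]]].
  - set (chi := bump (fun t => d t s) r).
    assert (Hchi : forall t, 0 <= chi t <= 1) by (intros; apply bump_range).
    destruct (Lip0_lipschitz G HG) as [K [HK HGK]].
    assert (HB : 0 <= B) by (pose proof (HGB o); pose proof (Rabs_pos (G o)); lra).
    assert (HGchi : Lip0 d o (fun t => G t * chi t)).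
    { split; [rewrite (proj1 HG); ring |]. exists (K + B * / r).
      pose proof (Rinv_0_lt_compat r Hr).
      apply lipschitz_mul_cutoff; auto; try lra.
      apply bump_lipschitz, lipschitz_dist; auto. }
    destruct (Req_dec (Phi (fun t => G t * chi t)) 0) as [Hnear | Hnear].
    + apply (IH (fun t => G t - G t * chi t)).
      * apply Lip0_sub; auto.
      * intros t. replace (G t - G t * chi t) with (G t * (1 - chi t)) by ring.
        eapply Rle_trans; [apply Rabs_mul_unit | apply HGB]. pose proof (Hchi t). lra.
      * rewrite Phi_sub, Hnear by auto. lra.
      * intros t Ht. assert (HGt : G t <> 0) by (intros E; apply Ht; rewrite E; ring).
        destruct (HGS t HGt) as [HUt [s' [[<- | Hs'] Hd]]]; [| eauto].
        exfalso. apply Ht. unfold chi. rewrite bump_one by lra. ring.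
    + exists s, (fun t => G t * chi t). split; [auto | split; [| auto]].
      intros t Ht. split.
      * apply (HGS t). intros E. apply Ht. rewrite E. ring.
      * apply (bump_support (fun t => d t s)); auto.
        intros E. apply Ht. unfold chi. rewrite E. ring.
Qed.

Lemma charges_ball U rho : charges U -> 0 < rho -> exists s, charges (fun t => U t /\ d t s < rho).
Proof.
  intros HU Hrho. destruct (charges_bounded U HU) as [g [B [HB [Hg [HgB [HgU Hpg]]]]]].
  destruct (Lip0_lipschitz g Hg) as [K [HK HgK]].
  set (r := rho / 2). assert (Hr : 0 < r) by (unfold r; lra).
  pose proof (Rinv_0_lt_compat r Hr).
  set (L := K + B * / r). assert (HL : 0 < L) by (unfold L; nra).
  pose proof (Rabs_pos_lt _ Hpg) as Ha.
  destruct (Phi_approx_points (Rabs (Phi g) / (2 * L))) as [S HS]; [apply Rdiv_lt_0_compat; lra |].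
  (* rest vanishes on the points S of an approximating combination, so Phi rest is small,
     while g - rest lives within r of S. *)
  set (rest := fun t => g t * avoid r S t).
  assert (Hrest : lipschitz_with d rest L).
  { apply lipschitz_mul_cutoff; auto; try lra.
    - apply avoid_lipschitz; auto.
    - intros; apply avoid_range. }
  assert (Hrest0 : rest o = 0) by (unfold rest; rewrite (proj1 Hg); ring).
  assert (HLrest : Lip0 d o rest) by (split; eauto).
  assert (Hsmall : Rabs (Phi rest) <= Rabs (Phi g) / 2).
  { rewrite <- (Rminus_0_r (Phi rest)), <- (Phi_vanishing (fun _ => 0)) by auto.
    replace (Rabs (Phi g) / 2) with (Rabs (Phi g) / (2 * L) * L) by (field; lra).
    apply HS; auto; [apply (lipschitz_le _ 0); [lra | apply lipschitz_const] |].
    intros s Hs. unfold rest. rewrite avoid_zero by auto. ring. }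
  replace rho with (2 * r) by (unfold r; lra).
  apply (charges_cover U r B Hr S (fun t => g t - rest t)).
  - apply Lip0_sub; auto.
  - intros t. unfold rest. replace (g t - g t * avoid r S t) with (g t * (1 - avoid r S t)) by ring.
    eapply Rle_trans; [apply Rabs_mul_unit | apply HgB]. pose proof (avoid_range r S t). lra.
  - rewrite Phi_sub by auto. intros E. replace (Phi rest) with (Phi g) in Hsmall by lra. lra.
  - intros t Ht. unfold rest in Ht. split.
    + apply HgU. intros E. apply Ht. rewrite E. ring.
    + apply avoid_near; auto. pose proof (avoid_range r S t).
      destruct (Req_dec (avoid r S t) 1) as [E | E]; [| lra].
      exfalso. apply Ht. rewrite E. ring.
Qed.

Lemma point_mass p : (forall r, 0 < r -> ~ charges (fun t => r <= d t p /\ r <= d t o)) ->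
  forall f, Lip0 d o f -> f p = 0 -> Phi f = 0.
Proof.
  intros Hno f Hf Hfp. apply NNPP. intros Hnz. pose proof (Rabs_pos_lt _ Hnz) as Ha.
  destruct (Lip0_lipschitz f Hf) as [K [HK HfK]].
  destruct (Phi_small (Rabs (Phi f) / 2) (3 * K)) as [eta [Heta Hsmall]]; [lra | lra |].
  set (r := eta / (2 * K)). assert (Hr : 0 < r) by (apply Rdiv_lt_0_compat; lra).
  (* Away from p and o, Phi vanishes by hypothesis; near them f is uniformly small, so
     Phi_small bounds Phi (f * psi) = Phi f. *)
  set (D := fun t => Rmin (d t p) (d t o)).
  set (psi := bump D r).
  assert (Hpsi : forall t, 0 <= psi t <= 1) by (intros; apply bump_range).
  assert (HfD : forall t, Rabs (f t) <= K * D t).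
  { intros t. pose proof (HfK t p) as Hp. pose proof (HfK t o) as Ho.
    rewrite Hfp, Rminus_0_r in Hp. rewrite (proj1 Hf), Rminus_0_r in Ho.
    unfold D, Rmin. destruct Rle_dec; auto. }
  assert (Hnear : forall t, psi t <> 0 -> Rabs (f t) <= eta).
  { intros t Ht. apply bump_support in Ht; auto. pose proof (HfD t).
    replace eta with (K * (2 * r)) by (unfold r; field; lra). nra. }
  assert (Hlip : lipschitz_with d (fun t => f t * psi t) (3 * K)).
  { replace (3 * K) with (K + eta * / r) by (unfold r; field; lra).
    pose proof (Rinv_0_lt_compat r Hr).
    apply lipschitz_mul_cutoff; auto; try lra.
    apply bump_lipschitz; auto. apply lipschitz_min; apply lipschitz_dist. }
  assert (HLpsi : Lip0 d o (fun t => f t * psi t)) by (split; eauto; rewrite (proj1 Hf); ring).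
  assert (Hfar : Phi (fun t => f t - f t * psi t) = 0).
  { apply NNPP. intros Hfar. apply (Hno r Hr). exists (fun t => f t - f t * psi t).
    split; [apply Lip0_sub; auto |]. split; auto.
    intros t Ht. assert (Hpsi1 : psi t <> 1) by (intros E; apply Ht; rewrite E; ring).
    assert (HDt : r < D t) by (apply Rnot_le_lt; intros Hle; apply Hpsi1, bump_one; auto).
    unfold D, Rmin in HDt. destruct Rle_dec; lra. }
  assert (Hbound : forall t, Rabs (f t * psi t) <= eta).
  { intros t. destruct (Req_dec (psi t) 0) as [E | E].
    - rewrite E, Rmult_0_r, Rabs_R0. lra.
    - eapply Rle_trans; [apply Rabs_mul_unit, Hpsi | auto]. }
  rewrite Phi_sub in Hfar by auto.
  pose proof (Hsmall _ (proj1 HLpsi) Hlip Hbound) as Hfpsi.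
  replace (Phi (fun t => f t * psi t)) with (Phi f) in Hfpsi by lra. lra.
Qed.

Context (Hcomp : complete_metric d).

Lemma halving_limit (s : nat -> T) C : (forall n, d (s n) (s (S n)) <= C * (/ 2) ^ n) ->
  exists p, forall n, d (s n) p <= 2 * C * (/ 2) ^ n.
Proof.
  intros Hstep.
  assert (HC : 0 <= C).
  { pose proof (Hstep 0%nat). pose proof (dist_nonneg (s 0%nat) (s 1%nat)). simpl in *. lra. }
  assert (Hfar : forall n k, d (s n) (s (n + k)%nat) <= 2 * C * ((/ 2) ^ n - (/ 2) ^ (n + k))).
  { intros n k. induction k as [| k IH].
    - rewrite Nat.add_0_r, dist_self. lra.
    - rewrite Nat.add_succ_r, <- tech_pow_Rmult.
      pose proof (dist_triangle (s n) (s (n + k)%nat) (s (S (n + k)))).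
      pose proof (Hstep (n + k)%nat). lra. }
  assert (Hcauchy : forall n m, (n <= m)%nat -> d (s n) (s m) <= 2 * C * (/ 2) ^ n).
  { intros n m Hnm. replace m with (n + (m - n))%nat by lia.
    pose proof (Hfar n (m - n)%nat). pose proof (pow_le (/ 2) (n + (m - n)) ltac:(lra)). nra. }
  destruct (Hcomp s) as [p Hp].
  { intros eps Heps. destruct (half_pow_small (eps / (4 * C + 1))) as [N HN].
    { apply Rdiv_lt_0_compat; lra. }
    exists N. intros m n Hm' Hn'. specialize (HN N (le_n N)).
    assert (HNeps : (4 * C + 1) * (/ 2) ^ N < eps).
    { apply (Rmult_lt_compat_l (4 * C + 1)) in HN; [| lra].
      replace ((4 * C + 1) * (eps / (4 * C + 1))) with eps in HN by (field; lra). lra. }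
    pose proof (Hcauchy N m Hm'). pose proof (Hcauchy N n Hn').
    pose proof (dist_triangle (s m) (s N) (s n)) as Htri. rewrite (dist_sym (s m) (s N)) in Htri.
    pose proof (pow_lt (/ 2) N ltac:(lra)). nra. }
  exists p. intros n. apply le_epsilon. intros eps Heps.
  destruct (Hp eps Heps) as [N HN].
  pose proof (Hcauchy n (Nat.max n N) (Nat.le_max_l n N)).
  pose proof (HN (Nat.max n N) (Nat.le_max_r n N)).
  pose proof (dist_triangle (s n) (s (Nat.max n N)) p). lra.
Qed.

Definition center (W : T -> Prop) (r : R) : T :=
  epsilon (inhabits o) (fun s => charges (fun t => W t /\ d t s < r)).

Fixpoint shrink (U : T -> Prop) (n : nat) : T -> Prop :=
  match n with
  | O => U
  | S k => fun t => shrink U k t /\ d t (center (shrink U k) ((/ 2) ^ k)) < (/ 2) ^ k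
  end.

Lemma shrink_charges U n : charges U -> charges (shrink U n).
Proof.
  intros HU. induction n as [| n IH]; simpl; auto.
  apply (epsilon_spec (inhabits o) (fun s => charges (fun t => shrink U n t /\ d t s < (/ 2) ^ n))).
  apply charges_ball; auto. apply pow_lt. lra.
Qed.

Lemma shrink_sub U n t : shrink U n t -> U t.
Proof. revert t. induction n as [| n IH]; simpl; auto. intros t [Ht _]. auto. Qed.

Lemma charges_point U : charges U ->
  exists p, forall r, 0 < r -> charges (fun t => U t /\ d t p < r).
Proof.
  intros HU. set (s := fun n => center (shrink U n) ((/ 2) ^ n)).
  assert (Hstep : forall n, d (s n) (s (S n)) <= 2 * (/ 2) ^ n).
  { intros n. destruct (charges_inhabited _ (shrink_charges U (S (S n)) HU)) as [t [[_ Hn] HSn]].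
    change (d t (s n) < (/ 2) ^ n) in Hn. change (d t (s (S n)) < (/ 2) ^ S n) in HSn.
    rewrite <- tech_pow_Rmult in HSn.
    pose proof (dist_triangle (s n) t (s (S n))) as Htri. rewrite (dist_sym (s n) t) in Htri.
    pose proof (pow_lt (/ 2) n ltac:(lra)). lra. }
  destruct (halving_limit s 2 Hstep) as [p Hp].
  exists p. intros r Hr. destruct (half_pow_small (r / 5)) as [n Hn]; [lra |].
  specialize (Hn n (le_n n)).
  apply (charges_mono (shrink U (S n))); [| apply shrink_charges; auto].
  intros t [Ht Htn]. change (d t (s n) < (/ 2) ^ n) in Htn.
  split; [apply (shrink_sub U n); auto |].
  pose proof (dist_triangle t (s n) p). pose proof (Hp n). lra.
Qed.

Definition flat_off (g : T -> R) (u : T) (rho : R) : Prop :=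
  forall x y, g x <> g y -> d x u < rho \/ d y u < rho.

(* Constancy off the ball, rather than support in it, lets the base point o qualify even
   though every element of Lip_0(M) vanishes there. *)
Definition essential_point (u : T) : Prop :=
  forall rho, 0 < rho -> exists g, Lip0 d o g /\ Phi g <> 0 /\ flat_off g u rho.

Lemma essential_of_charges U p : (forall r, 0 < r -> charges (fun t => U t /\ d t p < r)) ->
  essential_point p.
Proof.
  intros Hp rho Hrho. destruct (Hp rho Hrho) as [g [Hg [HgU Hpg]]].
  exists g. split; [auto | split; [auto |]]. intros x y Hxy.
  destruct (Req_dec (g x) 0) as [Hx | Hx].
  - right. apply (HgU y). intros Hy. apply Hxy. congruence.
  - left. apply (HgU x Hx).
Qed.

Lemma base_point_essential p : p <> o -> (forall f, Lip0 d o f -> f p = 0 -> Phi f = 0) ->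
  (exists f, Lip0 d o f /\ Phi f <> 0) -> essential_point o.
Proof.
  intros Hpo Hmass [f [Hf Hpf]] rho Hrho.
  assert (Hfp : f p <> 0) by (intros E; apply Hpf, Hmass; auto).
  set (r := Rmin rho (d p o)).
  assert (Hr : 0 < r) by (apply Rmin_pos; auto; apply dist_pos; auto).
  set (g := fun t => Rmin (d t o) r).
  assert (Hg : Lip0 d o g).
  { split; [unfold g; rewrite dist_self; apply Rmin_left; lra |]. exists 1.
    apply lipschitz_min; [apply lipschitz_dist |].
    apply (lipschitz_le _ 0); [lra | apply lipschitz_const]. }
  assert (Hgp : g p = r) by (apply Rmin_right, Rmin_r).
  exists g. split; [auto | split].
  - assert (Hk : Phi (fun t => g t - r / f p * f t) = 0).
    { apply Hmass; [apply (Lip0_comb 1 (- (r / f p)) g f); auto; intros; ring |].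
      rewrite Hgp. field. auto. }
    rewrite (Phi_comb 1 (- (r / f p)) g f) in Hk; auto; [| intros; ring].
    intros Hg0. rewrite Hg0 in Hk. apply Hpf.
    apply (Rmult_eq_reg_l (r / f p)); [lra |]. apply Rmult_integral_contrapositive.
    split; [lra | apply Rinv_neq_0_compat; auto].
  - intros x y Hxy. apply NNPP. intros Hfar. apply Hxy. unfold g.
    assert (Hx : rho <= d x o) by (apply Rnot_lt_le; intros H; apply Hfar; auto).
    assert (Hy : rho <= d y o) by (apply Rnot_lt_le; intros H; apply Hfar; auto).
    assert (r <= rho) by apply Rmin_l.
    rewrite !Rmin_right by lra. reflexivity.
Qed.

Context (Hcl : in_weak_closure_of_molecules d o Phi).

Lemma abs_Phi_molecule u1 u2 : u1 <> u2 -> essential_point u1 -> essential_point u2 ->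
  forall f, Lip0 d o f -> Rabs (Phi f) = Rabs (molecule d u1 u2 f).
Proof.
  intros Hne H1 H2 f Hf. apply NNPP. intros Hneq.
  set (gam := Rabs (Rabs (Phi f) - Rabs (molecule d u1 u2 f))).
  assert (Hgam : 0 < gam) by (apply Rabs_pos_lt; lra).
  destruct (Lip0_lipschitz f Hf) as [K [HK HfK]].
  destruct (abs_molecule_near u1 u2 f K (gam / 2)) as [rho [Hrho Hnear]]; auto; try lra.
  destruct (H1 rho Hrho) as [g1 [Hg1 [Hp1 Hs1]]].
  destruct (H2 rho Hrho) as [g2 [Hg2 [Hp2 Hs2]]].
  set (eps := Rmin (gam / 2) (Rmin (Rabs (Phi g1)) (Rabs (Phi g2)))).
  assert (Heps : 0 < eps) by (apply Rmin_pos; [lra | apply Rmin_pos; apply Rabs_pos_lt; auto]).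
  assert (Heps1 : eps <= gam / 2) by apply Rmin_l.
  assert (Heps2 : eps <= Rabs (Phi g1)) by (eapply Rle_trans; [apply Rmin_r | apply Rmin_l]).
  assert (Heps3 : eps <= Rabs (Phi g2)) by (eapply Rle_trans; [apply Rmin_r | apply Rmin_r]).
  assert (Htests : Forall (Lip0 d o) (f :: g1 :: g2 :: nil))
    by (repeat (apply Forall_cons; [assumption |]); apply Forall_nil).
  destruct (Hcl _ eps Htests Heps) as [x [y [Hxy Hclose]]].
  rewrite Forall_forall in Hclose.
  pose proof (Hclose f (or_introl eq_refl)) as Hcf.
  pose proof (Hclose g1 (or_intror (or_introl eq_refl))) as Hc1.
  pose proof (Hclose g2 (or_intror (or_intror (or_introl eq_refl)))) as Hc2.
  pose proof (Hnear x y (Hs1 x y (molecule_separates x y g1 (Phi g1) ltac:(lra)))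
                        (Hs2 x y (molecule_separates x y g2 (Phi g2) ltac:(lra)))) as Hmol.
  pose proof (Rabs_triang_inv2 (Phi f) (molecule d x y f)) as Hrev.
  rewrite Rabs_minus_sym in Hcf.
  assert (Htri : gam <= Rabs (Rabs (Phi f) - Rabs (molecule d x y f))
                        + Rabs (Rabs (molecule d x y f) - Rabs (molecule d u1 u2 f))).
  { unfold gam. eapply Rle_trans; [| apply Rabs_triang]. right. f_equal. ring. }
  lra.
Qed.

Lemma Phi_sign (Psi : (T -> R) -> R) :
  (forall f g, Lip0 d o f -> Lip0 d o g -> Psi (fun t => f t + g t) = Psi f + Psi g) ->
  (forall f, Lip0 d o f -> Rabs (Phi f) = Rabs (Psi f)) ->
  (forall f, Lip0 d o f -> Phi f = Psi f) \/ (forall f, Lip0 d o f -> Phi f = - Psi f).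
Proof.
  intros Hadd Habs.
  destruct (classic (exists f0, Lip0 d o f0 /\ Psi f0 <> 0)) as [[f0 [Hf0 HPsi0]] | HPsi].
  - destruct (Rabs_eq_cases _ _ (Habs f0 Hf0)) as [E0 | E0]; [left | right]; intros f Hf;
      pose proof (Habs _ (Lip0_add f f0 Hf Hf0)) as Hsum; rewrite Phi_add, Hadd in Hsum by auto;
      destruct (Rabs_eq_cases _ _ Hsum), (Rabs_eq_cases _ _ (Habs f Hf)); lra.
  - left. intros f Hf. assert (HPf : Psi f = 0) by (apply NNPP; intros H; apply HPsi; eauto).
    pose proof (Habs f Hf) as Hf'. rewrite HPf, Rabs_R0 in Hf'. rewrite HPf.
    destruct (Req_dec (Phi f) 0) as [Z | Z]; auto. pose proof (Rabs_pos_lt _ Z). lra.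
Qed.

Lemma molecule_of_essential_points u1 u2 : u1 <> u2 -> essential_point u1 -> essential_point u2 ->
  exists x y, x <> y /\ same_functional d o Phi (molecule d x y).
Proof.
  intros Hne H1 H2.
  assert (Hadd : forall f g, Lip0 d o f -> Lip0 d o g ->
            molecule d u1 u2 (fun t => f t + g t) = molecule d u1 u2 f + molecule d u1 u2 g).
  { intros. unfold molecule, Rdiv. ring. }
  destruct (Phi_sign _ Hadd (abs_Phi_molecule u1 u2 Hne H1 H2)) as [Hpos | Hneg].
  - exists u1, u2. split; [auto | exact Hpos].
  - exists u2, u1. split; auto. intros f Hf. rewrite molecule_swap. auto.
Qed.

End FreeSpace.

Arguments charges {T} d o Phi U.

Theorem proposition2p13 (T : Type) (d : T -> T -> R) (o : T)
  (Hmetric : is_metric d) (Hcomplete : complete_metric d)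
  (Phi : (T -> R) -> R)
  (HF : in_free_space d o Phi)
  (Hcl : in_weak_closure_of_molecules d o Phi) :
  same_functional d o Phi (fun _ => 0) \/
  exists x y, x <> y /\ same_functional d o Phi (molecule d x y).
Proof.
  destruct (classic (exists f, Lip0 d o f /\ Phi f <> 0)) as [Hnz | Hzero].
  2: { left. intros f Hf. apply NNPP. intros Hpf. apply Hzero. eauto. }
  right.
  assert (Hall : charges d o Phi (fun _ => True)).
  { destruct Hnz as [f [Hf Hpf]]. exists f. auto. }
  destruct (charges_point Hmetric HF Hcomplete _ Hall) as [p Hp].
  pose proof (essential_of_charges _ p Hp) as Hpe.
  destruct (classic (exists r, 0 < r /\ charges d o Phi (fun t => r <= d t p /\ r <= d t o)))
    as [[r [Hr Haway]] | Hnear].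
  - destruct (charges_point Hmetric HF Hcomplete _ Haway) as [q Hq].
    apply (molecule_of_essential_points Hmetric HF Hcl p q); auto.
    + intros <-.
      destruct (charges_inhabited HF _ (Hq (r / 2) ltac:(lra))) as [t [[Htp _] Htq]]. lra.
    + exact (essential_of_charges _ q Hq).
  - assert (Hmass := point_mass Hmetric HF p (fun r Hr H => Hnear (ex_intro _ r (conj Hr H)))).
    assert (Hpo : p <> o).
    { intros ->. destruct Hnz as [f [Hf Hpf]]. apply Hpf, Hmass, Hf. auto. }
    exact (molecule_of_essential_points Hmetric HF Hcl p o Hpo Hpe
             (base_point_essential Hmetric HF p Hpo Hmass Hnz)).
Qed.
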